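(* For the $2$-server problem on the line, for any instance $I$, any prediction, and any $\lambda\in(0,1]$, there is $c\ge0$ depending only on the initial configuration such that $\mathrm{LambdaDC}(I)\le(1+1/\lambda)\cdot\mathrm{OPT}(I)+c$.
   Context: The $2$-server problem on the line: servers on $\mathbb{R}$ labeled $s_1\le s_2$, requests revealed online and served by moving a server to them; cost = total distance moved; $\mathrm{OPT}(I)$ is the optimal offline cost. A prediction gives for each request $r_t$ an index $p_t\in\{1,2\}$. LambdaDC: if $r_t<s_1$ or $r_t>s_2$, move only the closest server; if $s_1<r_t<s_2$ and $p_t=1$, move $s_1$ at speed $1$ and $s_2$ at speed $\lambda$ towards $r_t$ until one reaches it; if $p_t=2$, the speeds are swapped. *)

From Stdlib Require Import Reals List.
From Coquelicot Require Import Coquelicot.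
Open Scope R_scope.

(* Index of a server: s1 (left) or s2 (right). *)
Inductive srv := S1 | S2.

Definition lambdaDC_step (lam : R) (pi : srv) (s1 s2 r : R) : R * R :=
  if Rle_dec r s1 then (r, s2)
  else if Rle_dec s2 r then (s1, r)
  else match pi with
       | S1 => (* s1 speed 1, s2 speed lam, until one reaches r *)
         let t := Rmin (r - s1) ((s2 - r) / lam) in (s1 + t, s2 - lam * t)
       | S2 => (* s1 speed lam, s2 speed 1 *)
         let t := Rmin ((r - s1) / lam) (s2 - r) in (s1 + lam * t, s2 - t)
       end.

(* Total cost of LambdaDC on requests rs, starting at time t from (s1,s2);
   p t is the predicted index for the request revealed at time t. *)
Fixpoint lambdaDC_cost (lam : R) (p : nat -> srv) (t : nat) (s1 s2 : R)
    (rs : list R) : R :=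
  match rs with
  | nil => 0
  | r :: rs' =>
    let (n1, n2) := lambdaDC_step lam (p t) s1 s2 r in
    Rabs (n1 - s1) + Rabs (n2 - s2) + lambdaDC_cost lam p (S t) n1 n2 rs'
  end.

(* Offline schedules: the configuration (a_t, b_t) after serving request t.
   Feasible iff one of the two servers is at r_t. *)
Fixpoint feasible (rs : list R) (sch : list (R * R)) : Prop :=
  match rs, sch with
  | nil, nil => True
  | r :: rs', (a, b) :: sch' => (a = r \/ b = r) /\ feasible rs' sch'
  | _, _ => False
  end.

Fixpoint sched_cost (a0 b0 : R) (sch : list (R * R)) : R :=
  match sch with
  | nil => 0
  | (a, b) :: sch' => Rabs (a - a0) + Rabs (b - b0) + sched_cost a b sch'
  end.

Definition OPT (x1 x2 : R) (rs : list R) : R :=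
  real (Glb_Rbar (fun v => exists sch, feasible rs sch /\ v = sched_cost x1 x2 sch)).

From Stdlib Require Import Reals List Lra Psatz.
From Coquelicot Require Import Coquelicot.
Open Scope R_scope.

(* Amortised analysis with the potential
     Psi = (1 + lam) * (|s1 - y1| + |s2 - y2|) + (s2 - s1),
   where s1 <= s2 are the online servers and y1 <= y2 the offline ones.
   An offline move of cost d raises Psi by at most (1 + lam) d, and every
   LambdaDC move of cost d lowers Psi by at least lam d once the offline
   schedule covers the request.  Summing, lam * ALG <= (1 + lam) * OPT + Psi_0
   with Psi_0 = x2 - x1, and dividing by lam gives the bound with
   c = (x2 - x1) / lam. *)

Definition pair_dist (a1 a2 b1 b2 : R) : R := Rabs (a1 - b1) + Rabs (a2 - b2).

Lemma pair_dist_sym a1 a2 b1 b2 : pair_dist a1 a2 b1 b2 = pair_dist b1 b2 a1 a2.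
Proof. unfold pair_dist; rewrite (Rabs_minus_sym a1), (Rabs_minus_sym a2); reflexivity. Qed.

Lemma pair_dist_triangle a1 a2 b1 b2 c1 c2 :
  pair_dist a1 a2 c1 c2 <= pair_dist a1 a2 b1 b2 + pair_dist b1 b2 c1 c2.
Proof. unfold pair_dist; split_Rabs; lra. Qed.

Lemma pair_dist_sort a b a0 b0 :
  pair_dist (Rmin a b) (Rmax a b) (Rmin a0 b0) (Rmax a0 b0) <= pair_dist a b a0 b0.
Proof.
  unfold pair_dist, Rmin, Rmax.
  destruct (Rle_dec a b), (Rle_dec a0 b0); split_Rabs; lra.
Qed.

Definition potential (lam s1 s2 y1 y2 : R) : R :=
  (1 + lam) * pair_dist s1 s2 y1 y2 + (s2 - s1).

Lemma potential_nonneg lam s1 s2 y1 y2 :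
  0 <= lam -> s1 <= s2 -> 0 <= potential lam s1 s2 y1 y2.
Proof.
  intros Hlam Hs; unfold potential, pair_dist.
  pose proof (Rabs_pos (s1 - y1)); pose proof (Rabs_pos (s2 - y2)); nra.
Qed.

(* The offline configuration enters the potential sorted, since the labels of
   an offline schedule are arbitrary. *)
Lemma potential_offline_move lam s1 s2 a b a0 b0 :
  0 <= lam ->
  potential lam s1 s2 (Rmin a b) (Rmax a b) <=
  potential lam s1 s2 (Rmin a0 b0) (Rmax a0 b0) + (1 + lam) * pair_dist a b a0 b0.
Proof.
  intros Hlam; unfold potential.
  pose proof (pair_dist_triangle s1 s2 (Rmin a0 b0) (Rmax a0 b0) (Rmin a b) (Rmax a b)).
  pose proof (pair_dist_sort a b a0 b0).
  rewrite (pair_dist_sym (Rmin a0 b0)) in *.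
  nra.
Qed.

(* The moves of LambdaDC, forgetting which server the prediction made fast. *)
Inductive lambda_move (lam s1 s2 r : R) : R -> R -> Prop :=
  | move_left : r <= s1 -> lambda_move lam s1 s2 r r s2
  | move_right : s2 <= r -> lambda_move lam s1 s2 r s1 r
  | move_inner v1 v2 : 0 <= v1 -> 0 <= v2 -> s1 + v1 <= r <= s2 - v2 ->
      v2 = lam * v1 \/ v1 = lam * v2 ->
      lambda_move lam s1 s2 r (s1 + v1) (s2 - v2).

Lemma Rmin_div_bounds lam a b :
  0 < lam -> 0 <= a -> 0 <= b ->
  0 <= Rmin a (b / lam) /\ Rmin a (b / lam) <= a /\ lam * Rmin a (b / lam) <= b.
Proof.
  intros Hlam Ha Hb.
  assert (Hdiv : lam * (b / lam) = b) by (field; lra).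
  assert (0 <= b / lam) by (apply Rdiv_le_0_compat; lra).
  pose proof (Rmin_l a (b / lam)); pose proof (Rmin_r a (b / lam)).
  split; [apply Rmin_glb; lra | split; [lra | nra]].
Qed.

Lemma lambdaDC_step_move lam pi s1 s2 r :
  0 < lam ->
  lambda_move lam s1 s2 r (fst (lambdaDC_step lam pi s1 s2 r))
                          (snd (lambdaDC_step lam pi s1 s2 r)).
Proof.
  intros Hlam; unfold lambdaDC_step.
  destruct (Rle_dec r s1) as [Hleft|Hleft]; [now constructor|].
  destruct (Rle_dec s2 r) as [Hright|Hright]; [now constructor|].
  destruct pi; cbv zeta; cbn [fst snd].
  - destruct (Rmin_div_bounds lam (r - s1) (s2 - r)) as (H0 & H1 & H2); try lra.
    apply move_inner; [lra | nra | lra | now left].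
  - rewrite Rmin_comm.
    destruct (Rmin_div_bounds lam (s2 - r) (r - s1)) as (H0 & H1 & H2); try lra.
    apply move_inner; [nra | lra | lra | now right].
Qed.

Lemma lambda_move_amortized lam s1 s2 r n1 n2 y1 y2 :
  0 < lam <= 1 -> s1 <= s2 -> y1 <= y2 -> (y1 = r \/ y2 = r) ->
  lambda_move lam s1 s2 r n1 n2 ->
  n1 <= n2 /\
  lam * pair_dist n1 n2 s1 s2 + potential lam n1 n2 y1 y2 <= potential lam s1 s2 y1 y2.
Proof.
  intros Hlam Hs Hy Hcov Hmove.
  assert (Hyr : y1 <= r <= y2) by (destruct Hcov; lra).
  unfold potential, pair_dist.
  destruct Hmove as [Hleft|Hright|v1 v2 Hv1 Hv2 Hr Hratio].
  - split; [lra|]. split_Rabs; nra.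
  - split; [lra|]. split_Rabs; nra.
  - split; [lra|].
    (* Whichever prediction was followed, the server approaching the offline
       server at r moves at least lam times as far as the other one. *)
    destruct Hcov as [<-|<-].
    + assert (lam * v2 <= v1) by (destruct Hratio; nra).
      split_Rabs; nra.
    + assert (lam * v1 <= v2) by (destruct Hratio; nra).
      split_Rabs; nra.
Qed.

Lemma lambdaDC_cost_amortized lam p :
  0 < lam <= 1 ->
  forall rs sch t s1 s2 a0 b0, s1 <= s2 -> feasible rs sch ->
  lam * lambdaDC_cost lam p t s1 s2 rs <=
  (1 + lam) * sched_cost a0 b0 sch + potential lam s1 s2 (Rmin a0 b0) (Rmax a0 b0).
Proof.
  intros Hlam rs; induction rs as [|r rs IH]; intros sch t s1 s2 a0 b0 Hs Hfeas.
  - destruct sch; [|contradiction]; cbn.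
    pose proof (potential_nonneg lam s1 s2 (Rmin a0 b0) (Rmax a0 b0)); lra.
  - destruct sch as [|[a b] sch]; [contradiction|].
    destruct Hfeas as [Hcov Hfeas].
    cbn [lambdaDC_cost sched_cost].
    pose proof (lambdaDC_step_move lam (p t) s1 s2 r ltac:(lra)) as Hmove.
    destruct (lambdaDC_step lam (p t) s1 s2 r) as [n1 n2]; cbn in Hmove.
    assert (Hcov' : Rmin a b = r \/ Rmax a b = r)
      by (unfold Rmin, Rmax; destruct Rle_dec, Hcov; auto).
    destruct (lambda_move_amortized lam s1 s2 r n1 n2 (Rmin a b) (Rmax a b)
                Hlam Hs (Rmin_Rmax a b) Hcov' Hmove) as [Hn Hstep].
    pose proof (IH sch (S t) n1 n2 a b Hn Hfeas).
    pose proof (potential_offline_move lam s1 s2 a b a0 b0 ltac:(lra)).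
    unfold pair_dist in *; nra.
Qed.

Lemma feasible_exists rs : exists sch, feasible rs sch.
Proof.
  exists (map (fun r => (r, r)) rs).
  induction rs; cbn; auto.
Qed.

Lemma Glb_Rbar_ge (E : R -> Prop) (m : R) :
  (exists v, E v) -> (forall v, E v -> m <= v) -> m <= real (Glb_Rbar E).
Proof.
  intros [v Ev] Hlow.
  destruct (Glb_Rbar_correct E) as [Hlb Hglb].
  assert (Hm : Rbar_le m (Glb_Rbar E)) by (apply Hglb; intros w Ew; apply Hlow, Ew).
  pose proof (Hlb v Ev) as Hv.
  destruct (Glb_Rbar E); cbn in *; tauto.
Qed.

Theorem lemma6 :
  forall lam : R, 0 < lam <= 1 ->
  forall x1 x2 : R, x1 <= x2 ->
  exists c : R, 0 <= c /\
    forall (rs : list R) (p : nat -> srv),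
      lambdaDC_cost lam p 0 x1 x2 rs <= (1 + 1 / lam) * OPT x1 x2 rs + c.
Proof.
  intros lam Hlam x1 x2 Hx.
  exists ((x2 - x1) / lam); split; [apply Rdiv_le_0_compat; lra|].
  intros rs p.
  set (C := lambdaDC_cost lam p 0 x1 x2 rs).
  assert (Hpot : potential lam x1 x2 (Rmin x1 x2) (Rmax x1 x2) = x2 - x1).
  { rewrite Rmin_left, Rmax_right by lra.
    unfold potential, pair_dist; rewrite !Rminus_diag, Rabs_R0; ring. }
  assert (Hopt : (lam * C - (x2 - x1)) / (1 + lam) <= OPT x1 x2 rs).
  { apply Glb_Rbar_ge; [now destruct (feasible_exists rs) as [sch ?]; eauto|].
    intros v [sch [Hfeas ->]].
    pose proof (lambdaDC_cost_amortized lam p Hlam rs sch 0 x1 x2 x1 x2 Hx Hfeas)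
      as Hamort.
    apply Rmult_le_reg_r with (1 + lam); [lra|].
    unfold Rdiv; rewrite Rmult_assoc, Rinv_l, Rmult_1_r by lra.
    fold C in Hamort; lra. }
  apply Rmult_le_compat_l with (r := (1 + lam) / lam) in Hopt;
    [|apply Rdiv_le_0_compat; lra].
  replace ((1 + lam) / lam * ((lam * C - (x2 - x1)) / (1 + lam)))
    with (C - (x2 - x1) / lam) in Hopt by (field; lra).
  replace (1 + 1 / lam) with ((1 + lam) / lam) by (field; lra).
  fold C; lra.
Qed.
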